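(* Let $f:\mathbb{R}^n\to\mathbb{R}$ be a continuously differentiable convex function. Let $H$ be a diagonal matrix with nonnegative diagonal entries such that $f(y)\le f(x)+\nabla f(x)^T(y-x)+\tfrac12\|y-x\|_H^2$ for all $x,y$, and let $D$ be diagonal with $D\succ H$. Assume additionally that $f$ is $s$-restricted strongly convex. Let $(x_k)$ be a sequence generated by the IWHT method with $D$. Then the entire sequence $(x_k)$ converges.
   Context: $\|z\|_A^2=z^TAz$. $C_s=\{x\in\mathbb{R}^n:\|x\|_0\le s\}$ for a positive integer $s$, where $\|x\|_0$ is the number of nonzero entries. $\mathcal{P}_{C_s}(z)=\operatorname{argmin}_{y\in C_s}\|y-z\|_2^2$ (set-valued). IWHT with diagonal $D\succ0$: start from $x_0\in C_s$, pick $y_{k+1}\in\mathcal{P}_{C_s}\big(D^{1/2}x_k-D^{-1/2}\nabla f(x_k)\big)$ and set $x_{k+1}=D^{-1/2}y_{k+1}$. $f$ is $s$-restricted strongly convex if there is $\sigma_s>0$ with $f(y)\ge f(x)+\nabla f(x)^T(y-x)+\frac{\sigma_s}{2}\|x-y\|_2^2$ for all $x,y$ with $\|x-y\|_0\le s$. *)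

From HB Require Import structures.
From mathcomp Require Import all_boot all_order all_algebra.
From mathcomp Require Import all_classical all_reals all_analysis.
Set Implicit Arguments. Unset Strict Implicit. Unset Printing Implicit Defensive.
Import Order.TTheory GRing.Theory Num.Theory.
Import numFieldNormedType.Exports.
Local Open Scope classical_set_scope.
Local Open Scope ring_scope.

Section Defs.
Variables (R : realType) (n : nat).
Implicit Types (x y z : 'rV[R]_n) (A : 'M[R]_n).

Definition dotv (u v : 'rV[R]_n) : R := (u *m v^T) 0 0.
Definition sqnorm2 x : R := dotv x x.
Definition sqnormA A x : R := (x *m A *m x^T) 0 0.

Definition posdef A : Prop := forall z : 'rV[R]_n, z != 0 -> 0 < sqnormA A z.
Definition loewner_gt A B : Prop := posdef (A - B).

Definition l0 x : nat := #|[set i : 'I_n | x 0 i != 0]|.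
Definition Cs (s : nat) : set 'rV[R]_n := [set x | (l0 x <= s)%N].
Definition projCs (s : nat) z : set 'rV[R]_n :=
  [set y | Cs s y /\ forall y', Cs s y' -> sqnorm2 (y - z) <= sqnorm2 (y' - z)].

Definition grad (f : 'rV[R]_n -> R) x : 'rV[R]_n :=
  \row_(i < n) 'D_(delta_mx 0 i) f x.

(* D^{1/2} and D^{-1/2} for a diagonal matrix D = diag_mx d with d > 0 *)
Definition sqrt_diag (d : 'rV[R]_n) : 'M[R]_n := diag_mx (\row_i Num.sqrt (d 0 i)).
Definition invsqrt_diag (d : 'rV[R]_n) : 'M[R]_n :=
  diag_mx (\row_i (Num.sqrt (d 0 i))^-1).

Definition convex_fun (f : 'rV[R]_n -> R) : Prop :=
  forall x y (t : R), 0 <= t <= 1 ->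
    f ((1 - t) *: x + t *: y) <= (1 - t) * f x + t * f y.

Definition restricted_strongly_convex (f : 'rV[R]_n -> R) (s : nat) : Prop :=
  exists sigma : R, 0 < sigma /\
    forall x y, (l0 (x - y) <= s)%N ->
      f x + dotv (grad f x) (y - x) + sigma / 2 * sqnorm2 (x - y) <= f y.

Definition IWHT_seq (f : 'rV[R]_n -> R) (s : nat) (d : 'rV[R]_n)
    (xs : nat -> 'rV[R]_n) : Prop :=
  Cs s (xs 0%N) /\
  forall k, exists y,
    projCs s (xs k *m sqrt_diag d - grad f (xs k) *m invsqrt_diag d) y /\
    xs k.+1 = y *m invsqrt_diag d.

End Defs.

From HB Require Import structures.
From mathcomp Require Import all_boot all_order all_algebra.
From mathcomp Require Import all_classical all_reals all_analysis.
From mathcomp Require Import ring lra.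
Import Order.TTheory GRing.Theory Num.Theory.
Import numFieldNormedType.Exports.
Local Open Scope classical_set_scope.
Local Open Scope ring_scope.
Set Implicit Arguments. Unset Strict Implicit. Unset Printing Implicit Defensive.

(* IWHT minimizes over C_s the quadratic model
   f(x_k) + <grad f(x_k), y - x_k> + ||y - x_k||_D^2 / 2, which majorizes f since
   D > H; hence f(x_k) decreases by at least ||x_(k+1) - x_k||_(D-H)^2 / 2 per step.
   Restricted strong convexity makes f coercive on C_s, so the iterates are bounded,
   f(x_k) converges and x_(k+1) - x_k -> 0.  A cluster point p satisfies
   grad f(p)_i = 0 on its support (near p the iterates keep that support, where the
   step is a plain gradient step), and restricted strong convexity allows only one
   such point per support.  The cluster points are thus finitely many, hence
   isolated, and a bounded sequence with vanishing steps and an isolated cluster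
   point converges to it. *)

Section RowVectors.
Variables (R : realType) (n : nat).
Implicit Types (u v w : 'rV[R]_n).

Lemma rV_subE u v i : (u - v) 0 i = u 0 i - v 0 i.
Proof. by rewrite !mxE. Qed.

Lemma dotvE u v : dotv u v = \sum_i u 0 i * v 0 i.
Proof. by rewrite /dotv mxE; apply: eq_bigr => i _; rewrite mxE. Qed.

Lemma sqnorm2E u : sqnorm2 u = \sum_i u 0 i ^+ 2.
Proof. by rewrite /sqnorm2 dotvE; apply: eq_bigr => i _; rewrite expr2. Qed.

Lemma sqnorm2N u : sqnorm2 (- u) = sqnorm2 u.
Proof. by rewrite !sqnorm2E; apply: eq_bigr => i _; rewrite mxE sqrrN. Qed.

Lemma sqnorm2_ge0 u : 0 <= sqnorm2 u.
Proof. by rewrite sqnorm2E; apply: sumr_ge0 => i _; exact: sqr_ge0. Qed.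

Lemma sqnormA_diagE w u : sqnormA (diag_mx w) u = \sum_i w 0 i * u 0 i ^+ 2.
Proof.
rewrite /sqnormA mul_mx_diag !mxE; apply: eq_bigr => i _; rewrite !mxE.
by rewrite expr2 [_ * w 0 i]mulrC mulrA.
Qed.

Lemma loewner_gt_diag w1 w2 :
  loewner_gt (diag_mx w1) (diag_mx w2) -> forall i, w2 0 i < w1 0 i.
Proof.
move=> w12 i; have ei_neq0 : delta_mx 0 i != 0 :> 'rV[R]_n.
  by apply/negP => /eqP/matrixP/(_ 0 i); rewrite !mxE !eqxx => /eqP; rewrite oner_eq0.
have sqnormA_ei w : sqnormA (diag_mx w) (delta_mx 0 i) = w 0 i.
  rewrite sqnormA_diagE (bigD1 i) //= big1 => [|j /negPf ji].
    by rewrite !mxE !eqxx expr1n mulr1 addr0.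
  by rewrite !mxE ji andbF expr0n mulr0.
have := w12 _ ei_neq0; rewrite /loewner_gt /posdef /sqnormA mulmxBr mulmxBl.
by rewrite [X in 0 < X]mxE [X in _ + X]mxE -!/(sqnormA _ _) !sqnormA_ei subr_gt0.
Qed.

Lemma ler_coord_norm u i : `|u 0 i| <= `|u|.
Proof.
rewrite [leRHS]/Num.Def.normr /= mx_normrE; apply/bigmax_geP; right => /=.
by exists (0, i).
Qed.

Lemma rV_norm_le u e : 0 <= e -> (forall i, `|u 0 i| <= e) -> `|u| <= e.
Proof.
move=> e_ge0 ue; rewrite /Num.Def.normr /= mx_normrE; apply: bigmax_le => //.
by move=> [a b] _ /=; rewrite (ord1 a).
Qed.

Lemma rV_norm_lt u e : 0 < e -> (forall i, `|u 0 i| < e) -> `|u| < e.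
Proof.
move=> e_gt0 ue; rewrite /Num.Def.normr /= mx_normrE; apply: bigmax_lt => //.
by move=> [a b] _ /=; rewrite (ord1 a).
Qed.

Definition supp u : {set 'I_n} := [set i | u 0 i != 0]%SET.

Lemma l0E u : l0 u = #|supp u|.
Proof. by apply: eq_card => i; rewrite inE /in_mem /mem /= /in_set asboolb. Qed.

Lemma l0N u : l0 (- u) = l0 u.
Proof. by rewrite !l0E; apply: eq_card => i; rewrite !inE mxE oppr_eq0. Qed.

Lemma leq_l0 u v : (forall i, u 0 i != 0 -> v 0 i != 0) -> (l0 u <= l0 v)%N.
Proof.
move=> uv; rewrite !l0E; apply/subset_leq_card/fintype.subsetP => i.
by rewrite !inE; exact: uv.
Qed.

Lemma nbhs_supp_sub p :
  exists2 e, 0 < e & forall v, `|v - p| < e -> forall i, p 0 i != 0 -> v 0 i != 0.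
Proof.
pose m i := if p 0 i != 0 then `|p 0 i| else 1.
exists (\big[Order.min/1]_i m i).
  by apply: lt_bigmin => // i _; rewrite /m; case: ifP => // pi; rewrite normr_gt0.
move=> v vp i pi; apply/eqP => vi.
have := le_lt_trans (ler_coord_norm (v - p) i) vp.
rewrite !mxE vi sub0r normrN => /lt_le_trans/(_ (bigmin_le 1 i m)).
by rewrite /m pi ltxx.
Qed.

End RowVectors.

Section HardThresholding.
Variables (R : realType) (n s : nat).
Implicit Types (x y z g : 'rV[R]_n).

(* Replacing [y_i] by [z_i] keeps the support of [y], so it stays in [C_s] and
   can only decrease the distance to [z]. *)
Lemma projCs_coord z y i : projCs s z y -> y 0 i != 0 -> y 0 i = z 0 i.
Proof.
move=> [Cy y_min] yi.
pose y' := \row_j (if j == i then z 0 i else y 0 j).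
have Cy' : Cs s y'.
  apply: leq_trans Cy; apply: leq_l0 => j; rewrite mxE.
  by case: (eqVneq j i) => [->|].
have := y_min _ Cy'; rewrite !sqnorm2E (bigD1 i) //= [leRHS](bigD1 i) //=.
rewrite [X in _ <= _ + X](eq_bigr (fun j => (y - z) 0 j ^+ 2)) => [|j /negPf ji]; last first.
  by rewrite !mxE ji.
rewrite !mxE eqxx subrr expr0n add0r gerDr => le0.
have : (y 0 i - z 0 i) ^+ 2 == 0 by rewrite eq_le le0 sqr_ge0.
by rewrite sqrf_eq0 subr_eq0 => /eqP.
Qed.

(* Comparing the projection with the feasible point [D^{1/2} x] gives the model
   decrease; on the support of [x'] the step is an exact gradient step. *)
Lemma IWHT_step (d : 'rV[R]_n) g x x' :
  (forall i, 0 < d 0 i) -> Cs s x ->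
  (exists y, projCs s (x *m sqrt_diag d - g *m invsqrt_diag d) y /\
             x' = y *m invsqrt_diag d) ->
  [/\ Cs s x',
      \sum_i (d 0 i * (x' 0 i - x 0 i) ^+ 2 + 2 * g 0 i * (x' 0 i - x 0 i)) <= 0 &
      forall i, x' 0 i != 0 -> g 0 i = d 0 i * (x 0 i - x' 0 i)].
Proof.
move=> d_gt0 Cx [y [y_proj ->]].
set z := _ - _ in y_proj.
have r_neq0 i : Num.sqrt (d 0 i) != 0 by rewrite gt_eqF // sqrtr_gt0.
have r_sq i : Num.sqrt (d 0 i) ^+ 2 = d 0 i by rewrite sqr_sqrtr // ltW.
have x'E i : (y *m invsqrt_diag d) 0 i = y 0 i / Num.sqrt (d 0 i).
  by rewrite mul_mx_diag !mxE.
have zE i : z 0 i = x 0 i * Num.sqrt (d 0 i) - g 0 i / Num.sqrt (d 0 i).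
  by rewrite /z !mul_mx_diag !mxE.
split.
- apply: leq_trans (proj1 y_proj); apply: leq_l0 => i.
  by rewrite x'E mulf_eq0 negb_or => /andP[].
- pose y0 := x *m sqrt_diag d.
  have Cy0 : Cs s y0.
    apply: leq_trans Cx; apply: leq_l0 => i.
    by rewrite /y0 /sqrt_diag mul_mx_diag mxE mulf_eq0 negb_or => /andP[].
  rewrite (_ : \sum_i _ = sqnorm2 (y - z) - sqnorm2 (y0 - z)) ?subr_le0.
    exact: (proj2 y_proj).
  rewrite !sqnorm2E -sumrB; apply: eq_bigr => i _.
  rewrite x'E [(y - z) 0 i]mxE [(y0 - z) 0 i]mxE [(- z) 0 i]mxE zE.
  rewrite /y0 /sqrt_diag mul_mx_diag !mxE.
  by move: (r_sq i) (r_neq0 i); set r := Num.sqrt (d 0 i) => <- r_neq0'; field.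
- move=> i; rewrite x'E => x'i.
  have yi : y 0 i != 0 by move: x'i; rewrite mulf_eq0 negb_or => /andP[].
  rewrite (projCs_coord y_proj yi) zE.
  by move: (r_sq i) (r_neq0 i); set r := Num.sqrt (d 0 i) => <- r_neq0'; field.
Qed.

End HardThresholding.

Section RestrictedStrongConvexity.
Variables (R : realType) (n s : nat) (f : 'rV[R]_n -> R) (sig : R).
Implicit Types (a b p q y : 'rV[R]_n).
Hypothesis sig_gt0 : 0 < sig.
Hypothesis f_rsc : forall x y, (l0 (x - y) <= s)%N ->
  f x + dotv (grad f x) (y - x) + sig / 2 * sqnorm2 (x - y) <= f y.

Lemma rsc_coercive : exists c, forall y, Cs s y -> c + sig / 4 * sqnorm2 y <= f y.
Proof.
pose g := grad f 0.
exists (f 0 - \sum_i g 0 i ^+ 2 / sig) => y Cy.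
have l0y : (l0 (0 - y) <= s)%N.
  by apply: leq_trans Cy; apply: leq_l0 => i; rewrite !mxE sub0r oppr_eq0.
have := f_rsc l0y; rewrite subr0 sub0r sqnorm2N dotvE !sqnorm2E; apply: le_trans.
rewrite !mulr_sumr -!addrA lerD2l addrC -sumrB -big_split /=; apply: ler_sum => i _.
(* completing the square *)
have : 0 <= sig / 4 * (y 0 i + 2 * g 0 i / sig) ^+ 2.
  by rewrite mulr_ge0 ?sqr_ge0 // divr_ge0 // ltW.
have -> : sig / 4 * (y 0 i + 2 * g 0 i / sig) ^+ 2 =
    sig / 4 * y 0 i ^+ 2 + g 0 i * y 0 i + g 0 i ^+ 2 / sig.
  by field; rewrite gt_eqF.
lra.
Qed.

Definition supp_stationary (p : 'rV[R]_n) : Prop := forall i, p 0 i != 0 -> grad f p 0 i = 0.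

Lemma supp_stationary_inj p q :
  Cs s p -> supp_stationary p -> supp_stationary q -> supp p = supp q -> p = q.
Proof.
move=> Cp p_stat q_stat /finset.setP pq.
have pq0 j : (p 0 j == 0) = (q 0 j == 0).
  by have := pq j; rewrite !inE => /negb_inj.
have grad_orth a b : (forall j, (a 0 j == 0) = (b 0 j == 0)) ->
    supp_stationary a -> dotv (grad f a) (b - a) = 0.
  move=> ab a_stat; rewrite dotvE big1 // => j _; rewrite rV_subE.
  have [aj|aj] := eqVneq (a 0 j) 0; last by rewrite a_stat // mul0r.
  by move: (ab j); rewrite aj eqxx => /esym/eqP ->; rewrite subrr mulr0.
have l0_pq : (l0 (p - q) <= s)%N.
  apply: leq_trans Cp; apply: leq_l0 => j; rewrite rV_subE.
  by apply: contra_neq => pj; move: (pq0 j); rewrite pj eqxx => /esym/eqP ->; rewrite subrr.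
have l0_qp : (l0 (q - p) <= s)%N by rewrite -opprB l0N.
have := f_rsc l0_pq; have := f_rsc l0_qp.
rewrite (grad_orth p q) // (grad_orth q p) //.
rewrite -opprB sqnorm2N !addr0 => le1 le2.
have : sig * sqnorm2 (p - q) <= 0 by lra.
rewrite pmulr_rle0 // => pq_le0.
have : sqnorm2 (p - q) = 0 by apply/eqP; rewrite eq_le pq_le0 sqnorm2_ge0.
rewrite sqnorm2E => /psumr_eq0P pq_eq0; apply/matrixP => k j; rewrite (ord1 k).
move: (pq_eq0 (fun i _ => sqr_ge0 _) j isT); rewrite !mxE => /eqP.
by rewrite sqrf_eq0 subr_eq0 => /eqP.
Qed.

End RestrictedStrongConvexity.

Section ClusterPoints.
Variables (R : realType) (n : nat).
Implicit Types (u : nat -> 'rV[R]_n) (p q : 'rV[R]_n).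

Definition cluster_point u p :=
  forall e, 0 < e -> forall N, exists2 k, (N <= k)%N & `|u k - p| < e.

Lemma bounded_cluster_point u B : (forall k, `|u k| <= B) -> exists p, cluster_point u p.
Proof.
move=> uB; pose A := closed_ball_ (fun v : 'rV[R]_n => `|v|) 0 B.
have A_compact : compact A.
  apply: bounded_closed_compact; last exact: closed_closed_ball_.
  rewrite /= /bounded_near; near=> M => v; rewrite /A /closed_ball_ /= sub0r normrN.
  move=> vB; apply: le_trans vB _; near: M; exact: nbhs_pinfty_ge (num_real B).
have [p [_ p_cl]] : A `&` cluster (u @ \oo) !=set0.
  by apply: A_compact; exists 0%N => // k _ /=; rewrite /A /closed_ball_ /= sub0r normrN.
exists p => e e_gt0 N.
have [_ [[k Nk <-]]] := p_cl (u @` [set k | (N <= k)%N]) (ball p e)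
  (ltac:(by exists N => // k /= Nk; exists k)) (@nbhsx_ballx _ _ p e e_gt0).
by rewrite -ball_normE /ball_ /= distrC; exists k.
Unshelve. all: by end_near.
Qed.

Lemma cluster_point_subseq u c q :
  (forall N, (N <= c N)%N) -> cluster_point (u \o c) q -> cluster_point u q.
Proof.
move=> c_ge q_cl e e_gt0 N; have [j Nj ucq] := q_cl e e_gt0 N.
by exists (c j) => //; exact: leq_trans Nj (c_ge j).
Qed.

(* Only finitely many supports exist, so the distances from [p] to the points
   of [Q] other than [p] take finitely many values. *)
Lemma supp_inj_isolated (Q : 'rV[R]_n -> Prop) p :
  (forall q1 q2, Q q1 -> Q q2 -> supp q1 = supp q2 -> q1 = q2) ->
  exists2 del, 0 < del & forall q, Q q -> q != p -> del <= `|q - p|.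
Proof.
move=> Q_inj.
pose P (S : {set 'I_n}) q := [/\ Q q, supp q = S & q != p].
pose dist S := if `[< exists q, P S q >] then `|xget 0 (P S) - p| else 1.
exists (\big[Order.min/1]_S dist S).
  apply: lt_bigmin => // S _; rewrite /dist; case: asboolP => // ex.
  by have [_ _ qp] := xgetPex 0 ex; rewrite normr_gt0 subr_eq0.
move=> q Qq qp; apply: le_trans (bigmin_le _ (supp q) _) _.
rewrite /dist; case: asboolP => [ex|[]]; last by exists q.
by have [Qx Sx _] := xgetPex 0 ex; rewrite (Q_inj _ _ Qx Qq Sx).
Qed.

(* The first exit from the [eps/2]-ball after a visit inside it cannot jump
   over the annulus, because the steps are shorter than [eps/2]. *)
Lemma cluster_point_annulus u p eps :
  0 < eps -> cluster_point u p ->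
  (exists N, forall k, (N <= k)%N -> `|u k.+1 - u k| < eps / 2) ->
  (forall N, exists2 k, (N <= k)%N & eps <= `|u k - p|) ->
  forall N, exists2 k, (N <= k)%N & eps / 2 <= `|u k - p| < eps.
Proof.
move=> eps_gt0 p_cl [N0 steps] far N.
have [k1 Nk1 k1_in] := p_cl (eps / 2) (ltac:(by rewrite divr_gt0)) (maxn N N0).
have out : exists j, eps / 2 <= `|u (k1 + j)%N - p|.
  have [k2 k12 k2_far] := far k1.
  by exists (k2 - k1)%N; rewrite subnKC //; apply: le_trans k2_far; lra.
case: (ex_minnP out) => [[|m] m_out m_min].
  by move: m_out; rewrite addn0 leNgt k1_in.
have m_in : `|u (k1 + m)%N - p| < eps / 2.
  by rewrite ltNge; apply/negP => /m_min; rewrite ltnn.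
move: Nk1; rewrite geq_max => /andP[Nk1 N0k1].
exists (k1 + m.+1)%N; first exact: leq_trans Nk1 (leq_addr _ _).
rewrite m_out /= addnS; apply: le_lt_trans (ler_distD (u (k1 + m)%N) _ _) _.
have := steps (k1 + m)%N (leq_trans N0k1 (leq_addr _ _)); lra.
Qed.

(* Otherwise [u] leaves a small ball around [p] infinitely often and, by
   [cluster_point_annulus], clusters at some [q != p] too close to [p]. *)
Lemma cvg_isolated_cluster_point u B p del :
  (forall k, `|u k| <= B) ->
  (forall e, 0 < e -> exists N, forall k, (N <= k)%N -> `|u k.+1 - u k| < e) ->
  cluster_point u p -> 0 < del ->
  (forall q, cluster_point u q -> q != p -> del <= `|q - p|) ->
  u @ \oo --> p.
Proof.
move=> uB steps p_cl del_gt0 p_iso; apply/cvgrPdist_lt => e e_gt0.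
pose eps := Order.min e (del / 2).
have eps_gt0 : 0 < eps by rewrite lt_min e_gt0 divr_gt0.
have eps_le_e : eps <= e by rewrite ge_min lexx.
have eps_le_del : eps <= del / 2 by rewrite ge_min lexx orbT.
suff [N uN] : exists N, forall k, (N <= k)%N -> `|u k - p| < eps.
  by exists N => // k /= /uN; rewrite distrC => /lt_le_trans; apply.
apply: contrapT => not_near.
have far N : exists2 k, (N <= k)%N & eps <= `|u k - p|.
  apply: contrapT => not_far; apply: not_near; exists N => k Nk.
  by rewrite ltNge; apply/negP => far_k; apply: not_far; exists k.
have half_gt0 : 0 < eps / 2 by rewrite divr_gt0.
have annulus := cluster_point_annulus eps_gt0 p_cl (steps _ half_gt0) far.
have /choice[c c_spec] : forall N, exists k, (N <= k)%N /\ eps / 2 <= `|u k - p| < eps.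
  by move=> N; have [k ? ?] := annulus N; exists k.
have [q q_cl] := bounded_cluster_point (fun N => uB (c N)).
have [j _ ucq] := q_cl (eps / 4) (ltac:(by rewrite divr_gt0)) 0%N.
have /andP[ucp_ge ucp_lt] := (c_spec j).2.
have qp : q != p by apply/eqP => qp; move: ucq; rewrite qp /=; lra.
have := p_iso q (cluster_point_subseq (fun N => (c_spec N).1) q_cl) qp.
have := ler_distD (u (c j)) q p; rewrite (distrC q (u _)); move: ucq => /= ucq; lra.
Qed.

End ClusterPoints.

Section IWHT.
Variables (R : realType) (n s : nat) (f : 'rV[R]_n -> R) (h d : 'rV[R]_n) (sig : R).
Variables (xs : nat -> 'rV[R]_n).
Hypothesis grad_cont : continuous (grad f).
Hypothesis h_ge0 : forall i, 0 <= h 0 i.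
Hypothesis h_lt_d : forall i, h 0 i < d 0 i.
Hypothesis f_descent : forall x y,
  f y <= f x + dotv (grad f x) (y - x) + 2^-1 * sqnormA (diag_mx h) (y - x).
Hypothesis sig_gt0 : 0 < sig.
Hypothesis f_rsc : forall x y, (l0 (x - y) <= s)%N ->
  f x + dotv (grad f x) (y - x) + sig / 2 * sqnorm2 (x - y) <= f y.
Hypothesis xs_IWHT : IWHT_seq f s d xs.

Lemma d_gt0 i : 0 < d 0 i.
Proof. exact: le_lt_trans (h_ge0 i) (h_lt_d i). Qed.

Lemma IWHT_Cs k : Cs s (xs k).
Proof.
case: xs_IWHT => xs0 xs_step; elim: k => [//|k IH].
by have [] := IWHT_step d_gt0 IH (xs_step k).
Qed.

Lemma IWHT_seq_step k :
  [/\ \sum_i (d 0 i * (xs k.+1 0 i - xs k 0 i) ^+ 2 +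
              2 * grad f (xs k) 0 i * (xs k.+1 0 i - xs k 0 i)) <= 0 &
      forall i, xs k.+1 0 i != 0 -> grad f (xs k) 0 i = d 0 i * (xs k 0 i - xs k.+1 0 i)].
Proof. by have [] := IWHT_step d_gt0 (IWHT_Cs k) (xs_IWHT.2 k). Qed.

Lemma IWHT_descent k :
  f (xs k.+1) + 2^-1 * \sum_i (d 0 i - h 0 i) * (xs k.+1 0 i - xs k 0 i) ^+ 2 <= f (xs k).
Proof.
have [model_le0 _] := IWHT_seq_step k.
have := f_descent (xs k) (xs k.+1); rewrite dotvE sqnormA_diagE.
under eq_bigr do rewrite rV_subE.
under [X in _ + 2^-1 * X]eq_bigr do rewrite rV_subE.
move: model_le0; rewrite big_split /=.
under [X in _ + X <= 0]eq_bigr do rewrite -mulrA.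
rewrite -mulr_sumr.
under [X in _ + 2^-1 * X <= f (xs k)]eq_bigr do rewrite mulrBl.
rewrite sumrB; lra.
Qed.

Lemma IWHT_f_nonincreasing : {homo f \o xs : a b / (a <= b)%N >-> b <= a}.
Proof.
apply/nonincreasing_seqP => k; apply: le_trans (IWHT_descent k).
rewrite lerDl mulr_ge0 ?invr_ge0 ?ler0n //; apply: sumr_ge0 => i _.
by rewrite mulr_ge0 ?sqr_ge0 // subr_ge0 ltW.
Qed.

Lemma IWHT_bounded : exists B, forall k, `|xs k| <= B.
Proof.
have [c f_ge] := rsc_coercive sig_gt0 f_rsc.
pose M := 4 / sig * (f (xs 0) - c).
have xs_sq k : sqnorm2 (xs k) <= M.
  have := f_ge _ (IWHT_Cs k); have := IWHT_f_nonincreasing (leq0n k).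
  rewrite /M -(invf_div sig 4) ler_pdivlMl ?divr_gt0 //=; lra.
exists (1 + M) => k; apply: rV_norm_le => [|i].
  by rewrite addr_ge0 // (le_trans (sqnorm2_ge0 (xs 0)) (xs_sq 0%N)).
have abs_le y : `|y| <= 1 + y ^+ 2 :> R.
  by rewrite -(real_normK (num_real y)); have := normr_ge0 y; nra.
apply: le_trans (abs_le _) _; rewrite lerD2l; apply: le_trans (xs_sq k).
by rewrite sqnorm2E (bigD1 i) //= lerDl sumr_ge0 // => j _; exact: sqr_ge0.
Qed.

(* [f (xs k)] converges, and by [IWHT_descent] the drop [f (xs k) - f (xs k.+1)]
   dominates [min_i (d_i - h_i) / 2 * |xs k.+1 - xs k|^2]. *)
Lemma IWHT_steps_vanish e :
  0 < e -> exists N, forall k, (N <= k)%N -> `|xs k.+1 - xs k| < e.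
Proof.
move=> e_gt0; pose mu := \big[Order.min/1]_i (d 0 i - h 0 i).
have mu_gt0 : 0 < mu by apply: lt_bigmin => // i _; rewrite subr_gt0.
have [c f_ge] := rsc_coercive sig_gt0 f_rsc.
have f_cvg : cvgn (f \o xs).
  apply: nonincreasing_is_cvgn IWHT_f_nonincreasing _; exists c => _ [k _ <-] /=.
  by apply: le_trans (f_ge _ (IWHT_Cs k)); rewrite lerDl mulr_ge0 ?divr_ge0 ?sqnorm2_ge0 ?ltW.
have eta_gt0 : 0 < mu * e ^+ 2 / 4 by rewrite divr_gt0 // mulr_gt0 // exprn_gt0.
move/cvgrPdist_lt: f_cvg => /(_ _ eta_gt0) [N _ f_near].
exists N => k Nk; apply: rV_norm_lt => // i; rewrite rV_subE.
rewrite -(ltr_pXn2r (ltn0Sn 1)) ?nnegrE ?normr_ge0 ?(ltW e_gt0) // real_normK ?num_real //.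
have mu_le : mu <= d 0 i - h 0 i := bigmin_le 1 i (fun i => d 0 i - h 0 i).
rewrite -(ltr_pM2l mu_gt0); apply: le_lt_trans (ler_wpM2r (sqr_ge0 _) mu_le) _.
have := f_near _ Nk; have := f_near _ (leqW Nk); have := IWHT_descent k.
rewrite (bigD1 i) //= !ltr_norml /=.
have : 0 <= \sum_(j | j != i) (d 0 j - h 0 j) * (xs k.+1 0 j - xs k 0 j) ^+ 2.
  by apply: sumr_ge0 => j _; rewrite mulr_ge0 ?sqr_ge0 // subr_ge0 ltW.
lra.
Qed.

Lemma IWHT_cluster_Cs p : cluster_point xs p -> Cs s p.
Proof.
move=> p_cl; have [e e_gt0 supp_sub] := nbhs_supp_sub p.
have [k _ xk_near] := p_cl e e_gt0 0%N.
by apply: leq_trans (IWHT_Cs k); apply: leq_l0; exact: supp_sub.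
Qed.

Lemma IWHT_grad_le k i :
  xs k.+1 0 i != 0 -> `|grad f (xs k) 0 i| <= d 0 i * `|xs k.+1 - xs k|.
Proof.
move=> xi; have [_ fixed] := IWHT_seq_step k.
rewrite fixed // normrM gtr0_norm ?d_gt0 // ler_pM2l ?d_gt0 //.
by rewrite (distrC (xs k 0 i)) -rV_subE; exact: ler_coord_norm.
Qed.

(* Near a cluster point [p] the iterates keep the support of [p], so there the
   step is a gradient step of vanishing length and [grad f] is close to [grad f p]. *)
Lemma IWHT_cluster_stationary p : cluster_point xs p -> supp_stationary f p.
Proof.
move=> p_cl i pi; apply/eqP; rewrite -normr_le0; apply/ler_addgt0Pr => e e_gt0.
rewrite add0r; have d1_gt0 : 0 < 1 + d 0 i by rewrite addr_gt0 ?d_gt0.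
pose eta := e / (1 + d 0 i); have eta_gt0 : 0 < eta by rewrite divr_gt0.
have [es es_gt0 supp_sub] := nbhs_supp_sub p.
have := @grad_cont p; move/cvgrPdist_lt => /(_ eta eta_gt0).
move=> /nbhs_ballP[del del_gt0 grad_near].
pose e1 := Order.min eta (es / 2); pose e2 := Order.min del (es / 2).
have e1_gt0 : 0 < e1 by rewrite lt_min eta_gt0 divr_gt0.
have e2_gt0 : 0 < e2 by rewrite lt_min del_gt0 divr_gt0.
have [N steps] := IWHT_steps_vanish e1_gt0.
have [k Nk xk_near] := p_cl e2 e2_gt0 N.
have step_k := steps k Nk.
have xk_del : `|xs k - p| < del by apply: lt_le_trans xk_near _; rewrite ge_min lexx.
have xk1_near : `|xs k.+1 - p| < es.
  apply: le_lt_trans (ler_distD (xs k) _ _) _.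
  have : e1 <= es / 2 by rewrite ge_min lexx orbT.
  have : e2 <= es / 2 by rewrite ge_min lexx orbT.
  lra.
have grad_k := IWHT_grad_le (supp_sub _ xk1_near i pi).
have grad_pk : `|grad f p 0 i - grad f (xs k) 0 i| < eta.
  rewrite -rV_subE; apply: le_lt_trans (ler_coord_norm _ i) _; apply: grad_near.
  by rewrite -ball_normE /ball_ /= distrC.
have step_eta : d 0 i * `|xs k.+1 - xs k| <= d 0 i * eta.
  rewrite ler_pM2l ?d_gt0 //; apply: ltW (lt_le_trans step_k _); by rewrite ge_min lexx.
have e_eq : (1 + d 0 i) * eta = e by rewrite /eta mulrC divfK ?gt_eqF.
have := ler_distD (grad f (xs k) 0 i) (grad f p 0 i) 0; rewrite !subr0.
lra.
Qed.

End IWHT.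

Theorem proposition4p7 (R : realType) (n s : nat) (f : 'rV[R]_n -> R)
    (h d : 'rV[R]_n) (xs : nat -> 'rV[R]_n) :
  (0 < s)%N ->
  (forall x, differentiable f x) ->
  continuous (grad f) ->
  convex_fun f ->
  (forall i, 0 <= h 0 i) ->
  (forall x y, f y <= f x + dotv (grad f x) (y - x) + 2^-1 * sqnormA (diag_mx h) (y - x)) ->
  loewner_gt (diag_mx d) (diag_mx h) ->
  restricted_strongly_convex f s ->
  IWHT_seq f s d xs ->
  exists l : 'rV[R]_n, xs @ \oo --> l.
Proof.
move=> _ _ grad_cont _ h_ge0 f_descent /loewner_gt_diag h_lt_d.
move=> [sig [sig_gt0 f_rsc]] xs_IWHT.
have [B xs_bounded] := IWHT_bounded h_ge0 h_lt_d f_descent sig_gt0 f_rsc xs_IWHT.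
have [p p_cl] := bounded_cluster_point xs_bounded.
have cl_stat := IWHT_cluster_stationary grad_cont h_ge0 h_lt_d f_descent sig_gt0 f_rsc xs_IWHT.
have cl_inj q1 q2 : cluster_point xs q1 -> cluster_point xs q2 ->
    supp q1 = supp q2 -> q1 = q2.
  move=> q1_cl q2_cl; apply: (supp_stationary_inj sig_gt0 f_rsc).
  - exact: IWHT_cluster_Cs h_ge0 h_lt_d xs_IWHT _ q1_cl.
  - exact: cl_stat q1_cl.
  - exact: cl_stat q2_cl.
have [del del_gt0 p_iso] := supp_inj_isolated p cl_inj.
exists p; apply: cvg_isolated_cluster_point xs_bounded _ p_cl del_gt0 p_iso.
exact: IWHT_steps_vanish h_ge0 h_lt_d f_descent sig_gt0 f_rsc xs_IWHT.
Qed.
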